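(* Let $\mathcal{A}$ be a finite totally ordered alphabet of size $n$. The monoid $\mathbf{Sylv}(\mathcal{A},2)$ contains exactly $\sum_{k=0}^n\binom{n}{k}S_k$ idempotents, where $(S_k)_{k\ge0}$ are the large Schröder numbers shifted by one: $S_0=S_1=1$, $S_2=2$, $S_3=6$, $S_4=22$, $\dots$ (i.e. $S_k$ is the $(k-1)$-th large Schröder number for $k\geq1$). Moreover, the idempotents are exactly the elements represented by the readings $\operatorname{R}(T)$ of the 2-reduced binary search trees $T$ such that, for every label $x$ occurring in $T$, the deepest node labelled $x$ in $T$ has no left subtree.
   Context: The sylvester monoid $\mathbf{Sylv}(\mathcal{A})$ is the quotient of the free monoid $\mathcal{A}^*$ by the relations $acWb=caWb$ for all $a,b,c\in\mathcal{A}$ with $a\le b<c$ and all $W\in\mathcal{A}^*$; $\mathbf{Sylv}(\mathcal{A},2)$ is its quotient by the additional relations $a^2=a$, $a\in\mathcal{A}$. A binary search tree $T=(L,r,R)$ is a binary tree with nodes labelled by $\mathcal{A}$ such that the label of each node is greater than or equal to all labels in its left subtree and strictly smaller than all labels in its right subtree. Its reading $\operatorname{R}(T)$ is the right-to-left postfix reading: $\operatorname{R}(\emptyset)$ is the empty word and $\operatorname{R}((L,r,R))=\operatorname{R}(R)\,\operatorname{R}(L)\,r$. A binary search tree is 2-reduced if no node has a left child carrying the same label as itself. *)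

From mathcomp Require Import all_boot.
Set Implicit Arguments. Unset Strict Implicit. Unset Printing Implicit Defensive.

(* The alphabet A of size n is 'I_n with its natural total order. *)

(** Two words are congruent iff they represent the same element of Sylv(A,2). *)
Inductive sylv2 (n : nat) : seq 'I_n -> seq 'I_n -> Prop :=
| sylv2_refl u : sylv2 u u
| sylv2_sym u v : sylv2 u v -> sylv2 v u
| sylv2_trans u v w : sylv2 u v -> sylv2 v w -> sylv2 u w
| sylv2_ctx p u v s : sylv2 u v -> sylv2 (p ++ u ++ s) (p ++ v ++ s)
| sylv2_rel (a b c : 'I_n) (W : seq 'I_n) :
    a <= b -> b < c ->
    sylv2 ([:: a; c] ++ W ++ [:: b]) ([:: c; a] ++ W ++ [:: b])
| sylv2_idem (a : 'I_n) : sylv2 [:: a; a] [:: a].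

Definition sylv2_idempotent n (w : seq 'I_n) : Prop := sylv2 (w ++ w) w.

Inductive btree (n : nat) : Type :=
| Leaf : btree n
| Node : btree n -> 'I_n -> btree n -> btree n.
Arguments Leaf {n}.

Fixpoint labels n (t : btree n) : seq 'I_n :=
  match t with
  | Leaf => [::]
  | Node l r rr => labels l ++ r :: labels rr
  end.

Fixpoint is_bst n (t : btree n) : bool :=
  match t with
  | Leaf => true
  | Node l r rr =>
      [&& all (fun x : 'I_n => x <= r) (labels l),
          all (fun x : 'I_n => r < x) (labels rr),
          is_bst l & is_bst rr]
  end.

Fixpoint reading n (t : btree n) : seq 'I_n :=
  match t with
  | Leaf => [::]
  | Node l r rr => reading rr ++ reading l ++ [:: r]
  end.

Fixpoint two_reduced n (t : btree n) : bool :=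
  match t with
  | Leaf => true
  | Node l r rr =>
      [&& (if l is Node _ x _ then x != r else true),
          two_reduced l & two_reduced rr]
  end.

Fixpoint nodes_info n (t : btree n) (d : nat) : seq ('I_n * nat * bool) :=
  match t with
  | Leaf => [::]
  | Node l r rr =>
      (r, d, if l is Leaf then true else false)
        :: nodes_info l d.+1 ++ nodes_info rr d.+1
  end.

Definition deepest_no_left n (t : btree n) : Prop :=
  forall x d b, (x, d, b) \in nodes_info t 0 ->
    (forall x' d' b', (x', d', b') \in nodes_info t 0 -> x' = x -> d' <= d) ->
    b = true.

(** Large Schröder numbers r_0 = 1, r_1 = 2, r_2 = 6, r_3 = 22, ... via
    r_m = r_(m-1) + sum_(k=0..m-1) r_k r_(m-1-k). *)
Fixpoint schroder_upto (m : nat) : seq nat :=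
  match m with
  | 0 => [:: 1]
  | m'.+1 =>
      let s := schroder_upto m' in
      rcons s (last 0 s + sumn [seq nth 0 s k * nth 0 s (m' - k) | k <- iota 0 m'.+1])
  end.
Definition large_schroder (m : nat) : nat := nth 0 (schroder_upto m) m.

Definition S_shift (k : nat) : nat :=
  if k is k'.+1 then large_schroder k' else 1.

Lemma S_shift_values :
  [:: S_shift 0; S_shift 1; S_shift 2; S_shift 3; S_shift 4; S_shift 5]
  = [:: 1; 1; 2; 6; 22; 90].
Proof. by []. Qed.

(* Inserting the letters of a word w from right to left into a binary search
   tree, where a letter reaching a node with the same label and no left child is
   absorbed, computes a normal form nf w: it is invariant under the sylvester and
   idempotency relations, reading (nf w) is congruent to w, and nf (reading t) = t
   for every 2-reduced search tree t.  As nf (w w) is nf w with the letters of w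
   inserted once more, and insertion never shrinks a tree, w is idempotent iff
   every letter of w is absorbed by nf w, i.e. iff every node of nf w with a
   nonempty left subtree repeats its label in that subtree.  The nodes of a search
   tree carrying a given label lie on one branch, so this says that the deepest
   node of each label has no left subtree.
   Call such 2-reduced search trees idempotent.  On a set of k >= 2 labels, the
   idempotent trees whose root is the largest label correspond, through their
   left subtree, to those whose root is not; splitting the latter at their root
   gives the recurrence of the large Schröder numbers for the number S_k of
   idempotent trees on k labels, and summing over label sets gives the binomial
   sum. *)

From HB Require Import structures.
From mathcomp Require Import all_boot.
Set Implicit Arguments. Unset Strict Implicit. Unset Printing Implicit Defensive.

Fixpoint btree_eqb n (s t : btree n) : bool :=
  match s, t with
  | Leaf, Leaf => true
  | Node l r rr, Node l' r' rr' => [&& btree_eqb l l', r == r' & btree_eqb rr rr']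
  | _, _ => false
  end.

Lemma btree_eqP n : Equality.axiom (@btree_eqb n).
Proof.
elim=> [|l IHl r rr IHr] [|l' r' rr'] /=; try by constructor.
case: (IHl l') => [->|]; last by constructor; case.
case: (r =P r') => [->|]; last by constructor; case.
case: (IHr rr') => [->|]; last by constructor; case.
by constructor.
Qed.

HB.instance Definition _ n := hasDecEq.Build (btree n) (@btree_eqP n).

Lemma sylv2_catl n (p u v : seq 'I_n) : sylv2 u v -> sylv2 (p ++ u) (p ++ v).
Proof. by move/(sylv2_ctx p [::]); rewrite !cats0. Qed.

Lemma sylv2_catr n (u v s : seq 'I_n) : sylv2 u v -> sylv2 (u ++ s) (v ++ s).
Proof. exact: (sylv2_ctx [::] s). Qed.

Lemma size_filter_lt (T : eqType) (p : pred T) s x :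
  x \in s -> ~~ p x -> size (filter p s) < size s.
Proof.
move=> sx px; rewrite size_filter -[ltnRHS](count_predC p) -[ltnLHS]addn0 ltn_add2l.
by rewrite -has_count; apply/hasP; exists x.
Qed.

Lemma filter_predC_all (T : eqType) (a : pred T) s : all (predC a) s -> filter a s = [::].
Proof. by rewrite all_predC has_filter negbK => /eqP. Qed.

(** * Insertion and normal forms *)

Section Insertion.
Variable n : nat.
Implicit Types (a b c x y r : 'I_n) (t l rr : btree n) (u v w : seq 'I_n).

(* The absorbing case realises the relation [x x = x]. *)
Fixpoint insert x t : btree n :=
  match t with
  | Leaf => Node Leaf x Leaf
  | Node l r rr =>
      if x <= r then
        if (x == r) && (l == Leaf) then t else Node (insert x l) r rr
      else Node l r (insert x rr)
  end.

Definition nf w : btree n := foldr insert Leaf w.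

Lemma insert_neq_Leaf x t : insert x t != Leaf.
Proof. by case: t => //= l r rr; case: ifP => //; case: ifP. Qed.

Lemma insert_left x r l rr : x <= r -> l != Leaf ->
  insert x (Node l r rr) = Node (insert x l) r rr.
Proof. by move=> /= -> /negbTE ->; rewrite andbF. Qed.

Lemma insert_right x r l rr : r < x -> insert x (Node l r rr) = Node l r (insert x rr).
Proof. by rewrite /= ltnNge => /negbTE ->. Qed.

Lemma labels_neq_Leaf x t : x \in labels t -> t != Leaf.
Proof. by case: t. Qed.

Lemma insert_idem x t : insert x (insert x t) = insert x t.
Proof.
elim: t => [|l IHl r rr IHr] /=; first by rewrite leqnn !eqxx.
case: ifP => [hxr|hrx]; last by rewrite /= hrx IHr.
case: ifP => [/andP[/eqP xr /eqP l0]|_]; first by rewrite /= hxr xr l0 !eqxx.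
by rewrite insert_left ?insert_neq_Leaf // IHl.
Qed.

Lemma mem_labels_insert x y t :
  (y \in labels (insert x t)) = (y == x) || (y \in labels t).
Proof.
elim: t => [|l IHl r rr IHr] /=; first by rewrite inE orbF.
case: ifP => _; last by rewrite !(mem_cat, inE) IHr; case: (y == x); rewrite ?orbT.
case: ifP => [/andP[/eqP <- _]|_] /=; last by rewrite !(mem_cat, inE) IHl -orbA.
by rewrite orb_idl // => /eqP ->; rewrite mem_cat inE eqxx orbT.
Qed.

Lemma mem_reading t : reading t =i labels t.
Proof.
elim: t => [|l IHl r rr IHr] //= y.
by rewrite !(mem_cat, inE) IHl IHr orbC -orbA orbCA.
Qed.

Lemma all_reading (P : pred 'I_n) t : all P (reading t) = all P (labels t).
Proof. exact: eq_all_r (mem_reading t) P. Qed.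

Lemma is_bst_insert x t : is_bst t -> is_bst (insert x t).
Proof.
elim: t => [|l IHl r rr IHr] //= /and4P[hl hr bl br].
case: ifP => hxr; first case: ifP => _ /=.
- by rewrite hl hr bl br.
- rewrite hr br IHl // !andbT; apply/allP=> y.
  by rewrite mem_labels_insert => /orP[/eqP ->//|]; exact: (allP hl).
- rewrite /= hl bl IHr // !andbT; apply/allP=> y.
  by rewrite mem_labels_insert => /orP[/eqP ->|]; [rewrite ltnNge hxr | exact: (allP hr)].
Qed.

Lemma insert_Node x l r rr : exists l' rr', insert x (Node l r rr) = Node l' r rr'.
Proof. by rewrite /=; case: ifP => _; [case: ifP => _|]; do 2!eexists. Qed.

Lemma two_reduced_insert x t : two_reduced t -> two_reduced (insert x t).
Proof.
elim: t => [|l IHl r rr IHr] //= /and3P[hl tl tr].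
case: ifP => hxr; last by rewrite /= hl tl IHr.
case: ifP => [_|hxl] /=; first by rewrite hl tl tr.
rewrite IHl // tr andbT.
case: l hl hxl {IHl tl} => [_|l1 y l2 hy _]; first by rewrite /= eqxx andbT => ->.
by have [l' [r' ->]] := insert_Node x l1 y l2; rewrite hy.
Qed.

Lemma insert_comm a b c t : is_bst t -> b \in labels t -> a <= b -> b < c ->
  insert a (insert c t) = insert c (insert a t).
Proof.
move=> + + hab hbc; elim: t => [|l IHl r rr IHr] // /and4P[hl hr bl br].
have diverge : a <= r -> r < c ->
    insert a (insert c (Node l r rr)) = insert c (insert a (Node l r rr)).
  move=> har hrc; rewrite insert_right //= har.
  by case: ifP => _; rewrite insert_right.
rewrite -[labels _]/(labels l ++ r :: labels rr) mem_cat inE.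
case/or3P=> [hbl|/eqP br_|hbr].
- have hbr : b <= r by move/allP: hl; apply.
  have har := leq_trans hab hbr.
  case: (leqP c r) => hcr; last exact: diverge.
  by rewrite !insert_left ?insert_neq_Leaf ?(labels_neq_Leaf hbl) // IHl.
- by apply: diverge; rewrite -br_ // (leq_trans hab).
- have hrb : r < b by move/allP: hr; apply.
  case: (leqP a r) => har; first exact: diverge (ltn_trans hrb hbc).
  by rewrite !insert_right ?(ltn_trans hrb hbc) // IHr.
Qed.

Lemma mem_labels_foldr_insert y t w :
  (y \in labels (foldr insert t w)) = (y \in w) || (y \in labels t).
Proof. by elim: w => //= x w IH; rewrite mem_labels_insert IH inE orbA. Qed.

Lemma mem_labels_nf w : labels (nf w) =i w.
Proof. by move=> y; rewrite mem_labels_foldr_insert orbF. Qed.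

Lemma is_bst_foldr_insert t w : is_bst t -> is_bst (foldr insert t w).
Proof. by move=> bt; elim: w => //= x w; apply: is_bst_insert. Qed.

Lemma is_bst_nf w : is_bst (nf w).
Proof. exact: is_bst_foldr_insert. Qed.

Lemma two_reduced_nf w : two_reduced (nf w).
Proof. by elim: w => //= x w; apply: two_reduced_insert. Qed.

Lemma foldr_insert_sylv2 u v : sylv2 u v ->
  forall t, is_bst t -> foldr insert t u = foldr insert t v.
Proof.
elim=> {u v} [u|u v _ IH|u v w _ IH1 _ IH2|p u v s _ IH|a b c W hab hbc|a] t bt.
- by [].
- by rewrite IH.
- by rewrite IH1 // IH2.
- by rewrite !foldr_cat IH // is_bst_foldr_insert.
- rewrite !foldr_cat /=; apply: insert_comm hab hbc.
    by rewrite is_bst_foldr_insert ?is_bst_insert.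
  by rewrite mem_labels_foldr_insert mem_labels_insert eqxx orbT.
- exact: insert_idem.
Qed.

Lemma nf_sylv2 u v : sylv2 u v -> nf u = nf v.
Proof. by move/foldr_insert_sylv2; apply. Qed.

Lemma sylv2_past_greater a b cs W : a <= b -> all (fun c => b < c) cs ->
  sylv2 (a :: cs ++ W ++ [:: b]) (cs ++ a :: W ++ [:: b]).
Proof.
move=> hab; elim: cs => [_|c cs IH /andP[hbc hcs]]; first exact: sylv2_refl.
have := sylv2_rel (cs ++ W) hab hbc; rewrite /= -catA => /sylv2_trans; apply.
exact: (@sylv2_catl _ [:: c] _ _ (IH hcs)).
Qed.

Lemma sylv2_insert x t : is_bst t -> sylv2 (x :: reading t) (reading (insert x t)).
Proof.
elim: t => [_|l IHl r rr IHr /= /and4P[hl hr bl br]]; first exact: sylv2_refl.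
case: ifP => hxr; last exact: sylv2_catr (IHr br).
have hrr : all (fun c => r < c) (reading rr) by rewrite all_reading.
apply: sylv2_trans (sylv2_past_greater (reading l) hxr hrr) _.
case: ifP => [/andP[/eqP -> /eqP ->]|_] /=.
  exact: sylv2_catl (sylv2_idem r).
exact (sylv2_ctx (reading rr) [:: r] (IHl bl)).
Qed.

Lemma sylv2_reading_nf w : sylv2 w (reading (nf w)).
Proof.
elim: w => [|x w IH] /=; first exact: sylv2_refl.
apply: sylv2_trans (sylv2_insert x (is_bst_nf w)).
exact: (@sylv2_catl _ [:: x] _ _ IH).
Qed.

Lemma foldr_insert_right r L S w : all (fun x => r < x) w ->
  foldr insert (Node L r S) w = Node L r (foldr insert S w).
Proof. by elim: w => //= x w IH /andP[hx /IH ->]; rewrite insert_right. Qed.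

Lemma foldr_insert_left r L S w : L != Leaf -> all (fun x => x <= r) w ->
  foldr insert (Node L r S) w = Node (foldr insert L w) r S.
Proof.
move=> L0; elim: w => //= x w IH /andP[hx /IH ->]; rewrite insert_left //.
by case: w {IH} => //= y w; rewrite insert_neq_Leaf.
Qed.

Lemma nf_reading t : is_bst t -> two_reduced t -> nf (reading t) = t.
Proof.
elim: t => [|l IHl r rr IHr] //= /and4P[hl hr bl br] /and3P[hroot tl tr].
rewrite /nf !foldr_cat /=.
have -> : foldr insert (Node Leaf r Leaf) (reading l) = Node l r Leaf.
  case: l hl bl hroot tl IHl => // l1 y l2 hl bl hyr tl IHl.
  have [hyr' hlr] : y <= r /\ all (fun x => x <= r) (reading l2 ++ reading l1).
    by move: hl; rewrite /= !all_cat !all_reading /= => /and3P[-> -> ->].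
  have -> : reading (Node l1 y l2) = (reading l2 ++ reading l1) ++ [:: y] by rewrite /= catA.
  rewrite foldr_cat /= hyr' (negbTE hyr) /= foldr_insert_left //.
  by rewrite -(IHl bl tl) /nf /= catA [in RHS]foldr_cat.
by rewrite foldr_insert_right ?all_reading // -/(nf _) IHr.
Qed.

Lemma sylv2_reading_inj t t' : is_bst t -> two_reduced t ->
  is_bst t' -> two_reduced t' -> sylv2 (reading t) (reading t') -> t = t'.
Proof. by move=> bt tt bt' tt' /nf_sylv2; rewrite !nf_reading. Qed.

Lemma sylv2_nfP u v : sylv2 u v <-> nf u = nf v.
Proof.
split; first exact: nf_sylv2.
move=> e; apply: sylv2_trans (sylv2_reading_nf u) _.
by rewrite e; apply: sylv2_sym; apply: sylv2_reading_nf.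
Qed.

(** * Idempotents *)

Lemma insert_fixed_or_grows x t :
  insert x t = t \/ size (labels (insert x t)) = (size (labels t)).+1.
Proof.
elim: t => [|l IHl r rr IHr] /=; first by right.
case: ifP => _; [case: ifP => _; first by left|].
- by case: IHl => [->|e]; [left|right; rewrite /= !size_cat /= e addSn].
- by case: IHr => [->|e]; [left|right; rewrite /= !size_cat /= e addnS].
Qed.

Lemma foldr_insert_fixed_or_grows t w :
  foldr insert t w = t \/ size (labels t) < size (labels (foldr insert t w)).
Proof.
elim: w => [|x w [IH|IH]] /=; first by left.
  by rewrite IH; case: (insert_fixed_or_grows x t) => [|->]; [left|right].
by right; case: (insert_fixed_or_grows x (foldr insert t w)) => [->|->] //; apply: ltnW.
Qed.

Lemma foldr_insert_fixed t w : foldr insert t w = t <-> {in w, forall x, insert x t = t}.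
Proof.
split; last first.
  elim: w => //= x w IH fixw; rewrite IH ?fixw ?mem_head // => y wy.
  by rewrite fixw // inE wy orbT.
elim: w => //= x w IH.
case: (foldr_insert_fixed_or_grows t w) => [wt|lt] e.
  by rewrite wt in e => y; rewrite inE => /orP[/eqP ->|]; last exact: IH.
case: (insert_fixed_or_grows x (foldr insert t w)) => [e'|grow].
  by move: lt; rewrite -{1}e e' ltnn.
by move: lt; rewrite -{1}e grow ltnNge leqnSn.
Qed.

Lemma sylv2_idempotent_nf w :
  sylv2_idempotent w <-> {in labels (nf w), forall x, insert x (nf w) = nf w}.
Proof.
apply: iff_trans (sylv2_nfP _ _) _; rewrite /nf foldr_cat -/(nf w).
apply: iff_trans (foldr_insert_fixed _ _) _.
by split=> h x hx; apply: h; rewrite ?mem_labels_nf // -mem_labels_nf.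
Qed.

Fixpoint left_repeats t : bool :=
  if t is Node l r rr then
    [&& (l == Leaf) || (r \in labels l), left_repeats l & left_repeats rr]
  else true.

Lemma insert_fixed_left_repeats t :
  is_bst t -> {in labels t, forall x, insert x t = t} <-> left_repeats t.
Proof.
elim: t => [|l IHl r rr IHr] //.
rewrite -[labels _]/(labels l ++ r :: labels rr) => /and4P[hl hr bl br].
split=> [fixt|].
  apply/and3P; split.
  - case: eqP => //= /eqP l0; have := fixt r; rewrite mem_cat mem_head orbT /=.
    by rewrite leqnn eqxx (negbTE l0) => /(_ isT) [<-]; rewrite mem_labels_insert eqxx.
  - apply/IHl => // x hx; have := fixt x; rewrite mem_cat hx => /(_ isT).
    by rewrite insert_left ?(allP hl) ?(labels_neq_Leaf hx) // => -[].
  - apply/IHr => // x hx; have := fixt x; rewrite mem_cat inE hx !orbT => /(_ isT).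
    by rewrite insert_right ?(allP hr) // => -[].
case/and3P=> hroot /(IHl bl) fixl /(IHr br) fixr x.
rewrite mem_cat inE => /or3P[hx|/eqP ->|hx].
- by rewrite insert_left ?(allP hl) ?(labels_neq_Leaf hx) ?fixl.
- rewrite /= leqnn eqxx /=; case: eqP hroot => //= /eqP l0 hrl.
  by rewrite fixl.
- by rewrite insert_right ?(allP hr) ?fixr.
Qed.

Definition deepest_no_left_from t d : Prop :=
  forall x e lf, (x, e, lf) \in nodes_info t d ->
    (forall e' lf', (x, e', lf') \in nodes_info t d -> e' <= e) -> lf.

Lemma deepest_no_left_from0 t : deepest_no_left t <-> deepest_no_left_from t 0.
Proof.
split=> dnl x e lf hin hmax; apply: (dnl x e lf hin).
  by move=> x' e' lf' + ex; rewrite ex; apply: hmax.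
by move=> e' lf' hin'; apply: hmax hin' erefl.
Qed.

Lemma mem_nodes_info_Node x e lf l r rr d :
  ((x, e, lf) \in nodes_info (Node l r rr) d) =
  [|| (x, e, lf) == (r, d, if l is Leaf then true else false),
      (x, e, lf) \in nodes_info l d.+1 | (x, e, lf) \in nodes_info rr d.+1].
Proof. by rewrite in_cons mem_cat. Qed.

Lemma mem_nodes_info t d x e lf :
  (x, e, lf) \in nodes_info t d -> x \in labels t /\ d <= e.
Proof.
elim: t d => [|l IHl r rr IHr] d //=.
rewrite inE mem_cat mem_cat inE.
by case/or3P=> [/eqP[-> -> _]|/IHl[-> /ltnW ->]|/IHr[-> /ltnW ->]];
  rewrite ?eqxx ?orbT.
Qed.

Lemma nodes_info_label t d x :
  x \in labels t -> exists e lf, (x, e, lf) \in nodes_info t d.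
Proof.
elim: t d => [|l IHl r rr IHr] d //=.
rewrite mem_cat inE => /or3P[/(IHl d.+1)|/eqP ->|/(IHr d.+1)].
- by case=> e [lf hin]; exists e, lf; rewrite inE mem_cat hin orbT.
- by exists d, (if l is Leaf then true else false); rewrite mem_head.
- by case=> e [lf hin]; exists e, lf; rewrite inE mem_cat hin !orbT.
Qed.

Lemma deepest_no_left_from_repeats t d :
  is_bst t -> deepest_no_left_from t d <-> left_repeats t.
Proof.
elim: t d => [|l IHl r rr IHr] d; first by [].
move=> /and4P[hl hr bl br]; split=> [dnl|].
  have sep x : x \in labels l -> x \in labels rr -> False.
    by move=> /(allP hl) xr /(allP hr) /(leq_ltn_trans xr); rewrite ltnn.
  apply/and3P; split.
  - case: l {IHl} hl bl dnl sep => // l1 y l2 _ _ dnl sep.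
    apply/orP; right; apply/negPn/negP=> hrl.
    suff : false by [].
    apply: (dnl r d); first exact: mem_head.
    move=> e' lf'; rewrite mem_nodes_info_Node => /or3P[/eqP[->]//||] /mem_nodes_info[].
      by rewrite (negbTE hrl).
    by move=> /(allP hr); rewrite ltnn.
  - apply/(IHl d.+1 bl) => x e lf hin hmax.
    apply: (dnl x e lf); first by rewrite mem_nodes_info_Node hin orbT.
    move=> e' lf'; rewrite mem_nodes_info_Node => /or3P[/eqP[_ -> _]|/hmax //|hin'].
      by case: (mem_nodes_info hin) => _ /ltnW.
    by case: (sep x); [case: (mem_nodes_info hin)|case: (mem_nodes_info hin')].
  - apply/(IHr d.+1 br) => x e lf hin hmax.
    apply: (dnl x e lf); first by rewrite mem_nodes_info_Node hin !orbT.
    move=> e' lf'; rewrite mem_nodes_info_Node => /or3P[/eqP[_ -> _]|hin'|/hmax //].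
      by case: (mem_nodes_info hin) => _ /ltnW.
    by case: (sep x); [case: (mem_nodes_info hin')|case: (mem_nodes_info hin)].
case/and3P=> hroot /(IHl d.+1 bl) dnl /(IHr d.+1 br) dnr x e lf.
rewrite mem_nodes_info_Node => /or3P[/eqP[-> -> ->]|hin|hin] hmax.
- case: l {IHl hl bl dnl} hroot hmax => // l1 y l2 /orP[/eqP //|hrl] hmax.
  have [e' [lf' hin']] := nodes_info_label d.+1 hrl.
  have [_ de'] := mem_nodes_info hin'.
  have := hmax e' lf'; rewrite mem_nodes_info_Node hin' orbT => /(_ isT).
  by rewrite leqNgt de'.
- by apply: dnl hin _ => e' lf' hin'; apply: (hmax e' lf'); rewrite mem_nodes_info_Node hin' orbT.
- by apply: dnr hin _ => e' lf' hin'; apply: (hmax e' lf'); rewrite mem_nodes_info_Node hin' !orbT.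
Qed.

Lemma deepest_no_leftP t : is_bst t -> deepest_no_left t <-> left_repeats t.
Proof.
move=> bt; apply: iff_trans (deepest_no_left_from0 t) _.
exact: deepest_no_left_from_repeats.
Qed.

Lemma sylv2_idempotentP w : sylv2_idempotent w <-> left_repeats (nf w).
Proof.
apply: iff_trans (sylv2_idempotent_nf w) _.
exact: insert_fixed_left_repeats (is_bst_nf w).
Qed.

Lemma sylv2_idempotent_reading t :
  is_bst t -> two_reduced t -> sylv2_idempotent (reading t) <-> left_repeats t.
Proof. by move=> bt tt; rewrite -{2}(nf_reading bt tt); apply: sylv2_idempotentP. Qed.

Lemma sylv2_idempotent_treeP w : sylv2_idempotent w <->
  exists t, [/\ is_bst t, two_reduced t, deepest_no_left t & sylv2 w (reading t)].
Proof.
split=> [idw|[t [bt tt dt wt]]].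
  exists (nf w); split; [exact: is_bst_nf | exact: two_reduced_nf | | exact: sylv2_reading_nf].
  exact/(deepest_no_leftP (is_bst_nf w))/(sylv2_idempotentP w).
by apply/(sylv2_idempotentP w); rewrite (nf_sylv2 wt) nf_reading //; apply/deepest_no_leftP.
Qed.

End Insertion.

(** * Counting *)

Lemma size_schroder_upto m : size (schroder_upto m) = m.+1.
Proof. by elim: m => //= m IH; rewrite size_rcons IH. Qed.

Lemma nth_schroder_upto m k : k <= m -> nth 0 (schroder_upto m) k = large_schroder k.
Proof.
elim: m => [|m IH]; first by rewrite leqn0 => /eqP ->.
rewrite leq_eqVlt => /orP[/eqP -> //|km].
by rewrite /= nth_rcons size_schroder_upto km IH.
Qed.

Lemma large_schroderS m : large_schroder m.+1 =
  large_schroder m + \sum_(k < m.+1) large_schroder k * large_schroder (m - k).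
Proof.
rewrite {1}/large_schroder /= nth_rcons size_schroder_upto ltnn eqxx.
rewrite -nth_last size_schroder_upto nth_schroder_upto //; congr (_ + _).
rewrite sumnE big_map.
rewrite -(big_mkord xpredT (fun k => large_schroder k * large_schroder (m - k))).
rewrite /index_iota subn0 big_cons !nth_schroder_upto ?leq_subr // subn0.
congr (_ + _); apply: eq_big_seq => k; rewrite mem_iota add1n ltnS => /andP[_ km].
by rewrite !nth_schroder_upto ?leq_subr.
Qed.

Lemma S_shift_rec m : S_shift m.+2 =
  \sum_(j < m.+1) (S_shift j.+1 + (j == 0 :> nat)) * S_shift (m.+1 - j).
Proof.
under eq_bigr do rewrite mulnDl.
rewrite /= large_schroderS big_split /= [RHS]addnC; congr (_ + _).
  by rewrite big_ord_recl big1 ?addn0 ?mul1n // => i _; rewrite lift0.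
by apply: eq_bigr => j _; rewrite subSn // -ltnS.
Qed.

(* The summand is twice the number of idempotent trees on [m] labels whose root is
   the [j.+1]-th smallest label, when that label is not the largest one. *)
Lemma S_shift_sum m : 0 < m ->
  \sum_(j < m) (0 < m - j.+1) * ((S_shift j.+1 + (j.+1 <= 1)) * S_shift (m - j.+1))
    + (m == 1) = S_shift m.
Proof.
case: m => [|[|m]] // _; first by rewrite big_ord1.
rewrite big_ord_recr /= subnn mul0n !addn0 -[large_schroder _]/(S_shift m.+2) S_shift_rec.
apply: eq_bigr => j _; rewrite subSS subn_gt0 ltn_ord mul1n.
by rewrite ltnS leqn0.
Qed.

Lemma sum_card_subsets (T : finType) (F : nat -> nat) :
  \sum_(A : {set T}) F #|A| = \sum_(0 <= k < #|T|.+1) 'C(#|T|, k) * F k.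
Proof.
rewrite big_mkord (partition_big (fun A : {set T} => inord #|A| : 'I_#|T|.+1) xpredT) //=.
apply: eq_bigr => k _; rewrite -card_draws -sum_nat_const.
have cardK (A : {set T}) : (inord #|A| : 'I_#|T|.+1) = k -> #|A| = k.
  by move=> <-; rewrite inordK // ltnS max_card.
apply: eq_big => [A|A /eqP /cardK -> //]; rewrite inE.
by apply/eqP/eqP=> [/cardK //|e]; apply: val_inj; rewrite /= -e inordK // ltnS max_card.
Qed.

(** * Enumeration of the idempotent trees *)

Section Enumeration.
Variable n : nat.
Implicit Types (x y z m r : 'I_n) (t l rr : btree n) (Y Z : seq 'I_n).

Local Notation ord_lt := (relpre (@nat_of_ord n) ltn).

Definition idem_tree t := [&& is_bst t, two_reduced t & left_repeats t].

Definition idem_on Z t : Prop := idem_tree t /\ labels t =i Z.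

Lemma idem_tree_Node l r rr : idem_tree (Node l r rr) =
  [&& all (fun x => x <= r) (labels l), all (fun x => r < x) (labels rr),
      idem_tree (Node l r Leaf) & idem_tree rr].
Proof.
rewrite /idem_tree /= !andbT; apply/idP/idP.
  by case/and3P=> /and4P[-> -> -> ->] /and3P[-> -> ->] /and3P[-> -> ->].
by case/and4P=> -> -> /and3P[/andP[_ ->] /andP[-> ->] /andP[-> ->]] /and3P[-> -> ->].
Qed.

Lemma idem_tree_Node_Leaf l r : idem_tree (Node l r Leaf) =
  [&& all (fun x => x <= r) (labels l), (if l is Node _ y _ then y != r else true),
      (l == Leaf) || (r \in labels l) & idem_tree l].
Proof.
rewrite /idem_tree /= !andbT; apply/idP/idP.
  by case/and3P=> /andP[-> ->] /andP[-> ->] /andP[-> ->].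
by case/and4P=> -> -> -> /and3P[-> -> ->].
Qed.

Lemma labels_Node_Leaf l r : labels (Node l r Leaf) = rcons (labels l) r.
Proof. by rewrite /= cats1. Qed.

Definition below Z r := [seq x : 'I_n <- Z | x <= r].
Definition above Z r := [seq x : 'I_n <- Z | r < x].

Lemma mem_below_above Z r x : (x \in Z) = (x \in below Z r) || (x \in above Z r).
Proof. by rewrite !mem_filter; case: leqP; rewrite /= ?orbF. Qed.

Lemma below_labels_Node l r rr :
    all (fun x => x <= r) (labels l) -> all (fun x => r < x) (labels rr) ->
  below (labels (Node l r rr)) r = labels (Node l r Leaf).
Proof.
move=> hl hr; rewrite /below /= filter_cat (all_filterP hl) /= leqnn filter_predC_all //.
by apply: sub_all hr => x; rewrite /= -ltnNge.
Qed.

Lemma above_labels_Node l r rr :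
    all (fun x => x <= r) (labels l) -> all (fun x => r < x) (labels rr) ->
  above (labels (Node l r rr)) r = labels rr.
Proof.
move=> hl hr; rewrite /above /= filter_cat /= ltnn (all_filterP hr) filter_predC_all //.
by apply: sub_all hl => x; rewrite /= -leqNgt.
Qed.

Lemma idem_on_Node Z l r rr : idem_on Z (Node l r rr) <->
  [/\ r \in Z, idem_on (below Z r) (Node l r Leaf) & idem_on (above Z r) rr].
Proof.
rewrite /idem_on idem_tree_Node; split.
  case=> /and4P[hl hr il ir] lZ; split=> //.
  - by rewrite -lZ /= mem_cat mem_head orbT.
  - split=> // x; rewrite -(below_labels_Node hl hr) !mem_filter.
    by rewrite lZ.
  - split=> // x; rewrite -(above_labels_Node hl hr) !mem_filter.
    by rewrite lZ.
case=> rZ [il lbelow] [ir labove].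
have hl : all (fun x => x <= r) (labels l).
  by move: il; rewrite idem_tree_Node_Leaf => /and4P[].
have hr : all (fun x => r < x) (labels rr).
  by apply/allP=> x; rewrite labove mem_filter => /andP[].
split; first by rewrite hl hr il ir.
move=> x; rewrite (mem_below_above Z r) -lbelow -labove /= !mem_cat !inE.
by rewrite orbA.
Qed.

Lemma size_below_lt Z r x : x \in Z -> r < x -> size (below Z r) < size Z.
Proof. by move=> xZ rx; rewrite (size_filter_lt xZ) // -ltnNge. Qed.

Lemma size_above_lt Z r : r \in Z -> size (above Z r) < size Z.
Proof. by move=> rZ; rewrite (size_filter_lt rZ) //= ltnn. Qed.

Lemma sorted_below Z r : sorted ord_lt Z -> sorted ord_lt (below Z r).
Proof. exact/sorted_filter/relpre_trans/ltn_trans. Qed.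

Lemma sorted_above Z r : sorted ord_lt Z -> sorted ord_lt (above Z r).
Proof. exact/sorted_filter/relpre_trans/ltn_trans. Qed.

Lemma sorted_ord_uniq Z : sorted ord_lt Z -> uniq Z.
Proof. by apply: sorted_uniq; [apply/relpre_trans/ltn_trans | move=> x; apply: ltnn]. Qed.

Lemma sorted_le_last z Z x : sorted ord_lt (z :: Z) -> x \in z :: Z -> x <= last z Z.
Proof.
elim: Z z x => [|y Z IH] z x /=; first by move=> _; rewrite inE => /eqP ->.
case/andP=> zy sZ; rewrite inE => /orP[/eqP ->|]; last exact: IH.
exact: leq_trans (ltnW zy) (IH _ _ sZ (mem_head _ _)).
Qed.

(* Label sets are increasing sequences [Z].  [nonmax_trees k Z] lists the
   idempotent trees on [Z] whose root is not the largest label [m] of [Z], the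
   fuel [k] bounding [size Z].  A tree with root [m] has no right subtree, and its
   left subtree is a leaf if [Z = [:: m]] and an idempotent tree on [Z] with
   non-maximal root otherwise: these are the [left_trees]. *)
Definition left_trees (g : seq 'I_n -> seq (btree n)) Z :=
  if size Z <= 1 then [:: Leaf] else g Z.

Definition all_trees (g : seq 'I_n -> seq (btree n)) Z :=
  if Z is z :: Z' then [seq Node l (last z Z') Leaf | l <- left_trees g Z] ++ g Z
  else [:: Leaf].

Fixpoint nonmax_trees k Z : seq (btree n) :=
  if k is k'.+1 then
    [seq t | r <- [seq r : 'I_n <- Z | has (fun x => r < x) Z],
             t <- [seq Node l r rr | l <- left_trees (nonmax_trees k') (below Z r),
                                     rr <- all_trees (nonmax_trees k') (above Z r)]]
  else [::].

Definition nonmax_root Z t := if t is Node _ r _ then has (fun x => r < x) Z else false.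

Definition enumerates (g : seq 'I_n -> seq (btree n)) Z :=
  forall t, t \in g Z <-> idem_on Z t /\ nonmax_root Z t.

Lemma left_treesP g Y m : sorted ord_lt Y -> m \in Y -> {in Y, forall x, x <= m} ->
  enumerates g Y -> forall t, t \in left_trees g Y <-> idem_on Y (Node t m Leaf).
Proof.
rewrite /left_trees => sY mY maxY gY t; case: leqP => [Y1|Y2].
  have -> : Y = [:: m].
    by case: Y {sY maxY gY} mY Y1 => [|y [|]] //; rewrite inE => /eqP ->.
  rewrite inE; split=> [/eqP ->|[]]; first by [].
  case: t => // l y rr; rewrite idem_tree_Node_Leaf => /and4P[_ ym _ _] lt.
  by move: (lt y); rewrite /= !(mem_cat, inE) eqxx orbT (negbTE ym).
apply: iff_trans (gY t) _; split.
  case=> [[it lt]]; case: t it lt => // l y rr it lt /hasP[x xY yx].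
  split=> [|x']; last by rewrite labels_Node_Leaf mem_rcons inE lt; case: eqP => [->|].
  rewrite idem_tree_Node_Leaf it lt mY orbT !andbT; apply/andP; split.
    by apply/allP=> x'; rewrite lt; apply: maxY.
  by rewrite neq_ltn (leq_trans yx) ?maxY.
case; rewrite idem_tree_Node_Leaf => /and4P[tm ym /orP[/eqP t0|mt] it] lt.
  suff : size Y <= size [:: m] by rewrite leqNgt Y2.
  apply: uniq_leq_size (sorted_ord_uniq sY) _ => x.
  by rewrite -lt t0.
have ltY : labels t =i Y.
  by move=> x; rewrite -lt labels_Node_Leaf mem_rcons inE; case: eqP => [->|].
split=> //; case: t ym tm mt it lt ltY => // l y rr ym tm _ _ _ ltY.
apply/hasP; exists m => //; rewrite ltn_neqAle ym.
by apply: (allP tm); rewrite /= mem_cat mem_head orbT.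
Qed.

Lemma all_treesP g Z : sorted ord_lt Z -> enumerates g Z ->
  forall t, t \in all_trees g Z <-> idem_on Z t.
Proof.
case: Z => [|z Z'] sZ gZ t /=.
  rewrite inE; split=> [/eqP ->|[_ lt]]; first by [].
  by case: t lt => // l r rr /(_ r); rewrite /= mem_cat mem_head orbT.
have maxZ := sorted_le_last sZ; have mZ := mem_last z Z'.
rewrite mem_cat; split.
  case/orP=> [/mapP[l hl ->]|/gZ[] //].
  exact: (left_treesP sZ mZ maxZ gZ l).1 hl.
case: t => [[_ /(_ z)]|l r rr ot]; first by rewrite mem_head.
case nm: (has (fun x => r < x) (z :: Z')); first by apply/orP; right; apply/gZ.
have rZ : r \in z :: Z' by rewrite -ot.2 /= mem_cat mem_head orbT.
have rm : r = last z Z'.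
  apply/val_inj/eqP; rewrite eqn_leq maxZ //= leqNgt.
  by apply: contraFN nm => mr; apply/hasP; exists (last z Z').
have rr0 : rr = Leaf.
  case: rr ot nm => // l' y r' [ot lt] nm.
  have yZ : y \in z :: Z' by rewrite -lt /= !(mem_cat, inE) eqxx !orbT.
  move: ot; rewrite idem_tree_Node => /and4P[_ /allP/(_ y) ry _ _].
  move/negbT/hasPn: nm => /(_ y yZ); rewrite ry //=.
  by rewrite !(mem_cat, inE) eqxx !orbT.
apply/orP; left; apply/mapP; exists l; last by rewrite -rm rr0.
by apply/(left_treesP sZ mZ maxZ gZ l).2; rewrite -rm -rr0.
Qed.

Lemma nonmax_treesP k Z : sorted ord_lt Z -> size Z <= k -> enumerates (nonmax_trees k) Z.
Proof.
elim: k Z => [|k IH] Z sZ Zk t.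
  by case: Z sZ Zk => // _ _; split=> //; case=> _; case: t.
have below_k r : has (fun x => r < x) Z -> size (below Z r) <= k.
  by case/hasP=> x xZ rx; rewrite -ltnS (leq_trans (size_below_lt xZ rx)).
have above_k r : r \in Z -> size (above Z r) <= k.
  by move=> rZ; rewrite -ltnS (leq_trans (size_above_lt rZ)).
have L_P r : r \in Z -> has (fun x => r < x) Z -> forall l,
    l \in left_trees (nonmax_trees k) (below Z r) <-> idem_on (below Z r) (Node l r Leaf).
  move=> rZ nm; apply: left_treesP (sorted_below _ sZ) _ _ (IH _ (sorted_below _ sZ) (below_k r nm)).
    by rewrite mem_filter leqnn.
  by move=> x; rewrite mem_filter => /andP[].
have F_P r : r \in Z -> forall rr,
    rr \in all_trees (nonmax_trees k) (above Z r) <-> idem_on (above Z r) rr.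
  by move=> rZ; apply: all_treesP (sorted_above _ sZ) (IH _ (sorted_above _ sZ) (above_k r rZ)).
split.
  case/allpairsPdep=> r [t' [+ + ->]]; rewrite mem_filter => /andP[nm rZ].
  case/allpairsP=> [[l rr] [/= /(L_P r rZ nm) hl /(F_P r rZ) hr ->]].
  by split=> //; apply/idem_on_Node.
case; case: t => // l r rr /idem_on_Node[rZ hl hr] nm.
apply/allpairsPdep; exists r, (Node l r rr); split=> //; first by rewrite mem_filter rZ andbT.
by apply/allpairsP; exists (l, rr); split=> //=; [apply/L_P | apply/F_P].
Qed.

Lemma uniq_left_trees g Z : uniq (g Z) -> uniq (left_trees g Z).
Proof. by rewrite /left_trees; case: ifP. Qed.

Lemma uniq_all_trees g Z : sorted ord_lt Z -> enumerates g Z -> uniq (g Z) ->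
  uniq (all_trees g Z).
Proof.
case: Z => // z Z' sZ gZ ug /=; rewrite cat_uniq ug andbT.
rewrite map_inj_uniq ?uniq_left_trees //; last by move=> l l' [].
apply/hasPn=> t /gZ[_]; case: t => // l r rr /hasP[x /(sorted_le_last sZ) xm rx].
by apply/mapP=> -[l' _ [_ rm _]]; move: rx; rewrite rm ltnNge xm.
Qed.

Lemma uniq_nonmax_trees k Z : sorted ord_lt Z -> size Z <= k -> uniq (nonmax_trees k Z).
Proof.
elim: k Z => // k IH Z sZ Zk /=.
apply: allpairs_uniq_dep.
- exact/filter_uniq/sorted_ord_uniq.
- move=> r; rewrite mem_filter => /andP[/hasP[x xZ rx] rZ].
  have sB := sorted_below r sZ; have sA := sorted_above r sZ.
  have kB : size (below Z r) <= k by rewrite -ltnS (leq_trans (size_below_lt xZ rx)).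
  have kA : size (above Z r) <= k by rewrite -ltnS (leq_trans (size_above_lt rZ)).
  apply: allpairs_uniq; first exact/uniq_left_trees/IH.
    exact: uniq_all_trees sA (nonmax_treesP sA kA) (IH _ sA kA).
  by move=> [l rr] [l' rr'] _ _ [-> ->].
- move=> [r t] [r' t'] /allpairsPdep[r1 [t1 [_ h e]]] /allpairsPdep[r2 [t2 [_ h' e']]].
  have tagged_eq := congr1 (@tagged 'I_n (fun=> btree n)).
  move: (congr1 tag e) (tagged_eq _ _ e) (congr1 tag e') (tagged_eq _ _ e') => /= -> -> -> ->.
  move: h h' => /allpairsP[[l rr] [_ _ ->]] /allpairsP[[l' rr'] [_ _ ->]].
  by move=> /= [-> -> ->].
Qed.

Lemma sum_below_above (F : nat -> nat -> nat) Z : sorted ord_lt Z ->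
  \sum_(r <- Z) F (size (below Z r)) (size (above Z r)) =
  \sum_(j < size Z) F j.+1 (size Z - j.+1).
Proof.
elim: Z F => [|z Z IH] F sZ; first by rewrite big_nil big_ord0.
have zZ : all (ord_lt z) Z := order_path_min (relpre_trans ltn_trans) sZ.
rewrite big_cons big_ord_recl subn1 /=; congr (_ + _).
  rewrite /below /above /= leqnn ltnn (all_filterP zZ) filter_predC_all //.
  by apply: sub_all zZ => x; rewrite /= -ltnNge.
rewrite -(IH (fun i j => F i.+1 j) (path_sorted sZ)).
apply: eq_big_seq => r /(allP zZ) /= zr.
by rewrite /below /above /= (ltnW zr) ltnNge (ltnW zr).
Qed.

Lemma size_nonmax_trees k Z : size (nonmax_trees k.+1 Z) =
  \sum_(r <- Z | has (fun x => r < x) Z)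
     size (left_trees (nonmax_trees k) (below Z r)) *
     size (all_trees (nonmax_trees k) (above Z r)).
Proof.
rewrite /= size_allpairs_dep sumnE big_map big_filter.
by apply: eq_bigr => r _; rewrite size_allpairs.
Qed.

Lemma size_trees k Z : sorted ord_lt Z -> size Z <= k ->
  size (all_trees (nonmax_trees k) Z) = S_shift (size Z) /\
  (size (left_trees (nonmax_trees k) Z)).*2 = S_shift (size Z) + (size Z <= 1).
Proof.
elim: k Z => [|k IH] Z sZ Zk; first by case: Z sZ Zk.
have nonmax2 : 0 < size Z ->
    (size (nonmax_trees k.+1 Z)).*2 + (size Z == 1) = S_shift (size Z).
  move=> Zpos; rewrite -(S_shift_sum Zpos) size_nonmax_trees -mul2n big_distrr /=.
  pose F b a := (0 < a) * ((S_shift b + (b <= 1)) * S_shift a).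
  rewrite big_mkcond -(sum_below_above F sZ); congr (_ + _); apply: eq_big_seq => r rZ.
  rewrite {}/F has_count -size_filter -/(above Z r); case: posnP => [-> //|Apos].
  have [x xZ rx] : exists2 x, x \in Z & r < x.
    by apply/hasP; rewrite has_count -size_filter.
  have [_ Lb] := IH _ (sorted_below r sZ) (leq_trans (size_below_lt xZ rx) Zk).
  have [Fa _] := IH _ (sorted_above r sZ) (leq_trans (size_above_lt rZ) Zk).
  by rewrite mul1n mulnA mul2n Lb Fa.
case: Z sZ Zk nonmax2 => // z Z' sZ Zk /(_ isT).
set g := nonmax_trees k.+1; set m := size (z :: Z').
have -> : size (all_trees g (z :: Z')) = size (left_trees g (z :: Z')) + size (g (z :: Z')).
  by rewrite /= size_cat size_map.
rewrite /left_trees -/m; case: (ltngtP m 1) => [|m_gt1 G2|->]; first by rewrite ltnS.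
  by rewrite -G2 !addn0 addnn.
by rewrite -[RHS]/1 => /eqP; rewrite addn1 eqSS double_eq0 => /eqP ->.
Qed.

Lemma sorted_enum_set (A : {set 'I_n}) : sorted ord_lt (enum A).
Proof.
rewrite /enum_mem -enumT; apply: sorted_filter; first exact/relpre_trans/ltn_trans.
by rewrite -sorted_map val_enum_ord iota_ltn_sorted.
Qed.

Lemma size_enum_set (A : {set 'I_n}) : size (enum A) <= n.
Proof. by rewrite -cardE -[n in _ <= n]card_ord max_card. Qed.

Definition idem_trees : seq (btree n) :=
  [seq t | A <- enum {set 'I_n}, t <- all_trees (nonmax_trees n) (enum (A : {set 'I_n}))].

Lemma idem_treesP t : t \in idem_trees <-> idem_tree t.
Proof.
have treesP (A : {set 'I_n}) : forall t,
    t \in all_trees (nonmax_trees n) (enum A) <-> idem_on (enum A) t.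
  exact: all_treesP (sorted_enum_set A) (nonmax_treesP (sorted_enum_set A) (size_enum_set A)).
split=> [/allpairsPdep[A [t' [_ /treesP[] + _ ->]]] //|it].
apply/allpairsPdep; exists [set x | x \in labels t], t; split=> //; first exact: mem_enum.
by apply/treesP; split=> // x; rewrite mem_enum inE.
Qed.

Lemma uniq_idem_trees : uniq idem_trees.
Proof.
have sA := sorted_enum_set; have kA := size_enum_set.
apply: allpairs_uniq_dep; first exact: enum_uniq.
  move=> A _; apply: uniq_all_trees (sA A) (nonmax_treesP (sA A) (kA A)) _.
  exact: uniq_nonmax_trees (sA A) (kA A).
move=> [A t] [A' t'] /allpairsPdep[B [u [_ + e]]] /allpairsPdep[B' [u' [_ + e']]].
have tagged_eq := congr1 (@tagged {set 'I_n} (fun=> btree n)).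
move: (congr1 tag e) (tagged_eq _ _ e) (congr1 tag e') (tagged_eq _ _ e') => /= -> -> -> ->.
move=> /(all_treesP (sA B) (nonmax_treesP (sA B) (kA B)))[_ lB].
move=> /(all_treesP (sA B') (nonmax_treesP (sA B') (kA B')))[_ lB'] uu'.
suff -> : B = B' by rewrite uu'.
by apply/setP=> x; rewrite -[x \in B]mem_enum -[x \in B']mem_enum -lB -lB' uu'.
Qed.

Lemma size_idem_trees : size idem_trees = \sum_(0 <= k < n.+1) 'C(n, k) * S_shift k.
Proof.
rewrite size_allpairs_dep sumnE big_map -[in RHS](card_ord n) -sum_card_subsets.
rewrite big_enum; apply: eq_big => // A _; rewrite cardE.
by case: (size_trees (sorted_enum_set A) (size_enum_set A)).
Qed.

Definition idem_readings : seq (seq 'I_n) := map (@reading n) idem_trees.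

Lemma idem_readingsP u : u \in idem_readings <-> exists2 t, idem_tree t & u = reading t.
Proof.
split=> [/mapP[t /idem_treesP it ->]|[t /idem_treesP it ->]]; first by exists t.
exact: map_f.
Qed.

Lemma sylv2_idem_readings : {in idem_readings &, forall u v, sylv2 u v -> u = v}.
Proof.
move=> _ _ /idem_readingsP[t /and3P[bt tt _] ->] /idem_readingsP[t' /and3P[bt' tt' _] ->].
by move/(sylv2_reading_inj bt tt bt' tt') ->.
Qed.

Lemma uniq_idem_readings : uniq idem_readings.
Proof.
rewrite map_inj_in_uniq ?uniq_idem_trees // => t t'.
move=> /idem_treesP/and3P[bt tt _] /idem_treesP/and3P[bt' tt' _] e.
by apply: (sylv2_reading_inj bt tt bt' tt'); rewrite e; apply: sylv2_refl.
Qed.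
End Enumeration.

Theorem mainTheorem7 (n : nat) :
  (exists s : seq (seq 'I_n),
      [/\ size s = \sum_(0 <= k < n.+1) 'C(n, k) * S_shift k,
          (forall w, w \in s -> sylv2_idempotent w),
          (forall i j, i < j < size s -> ~ sylv2 (nth [::] s i) (nth [::] s j)) &
          (forall w : seq 'I_n, sylv2_idempotent w -> exists2 u, u \in s & sylv2 w u)])
  /\
  (forall w : seq 'I_n,
      sylv2_idempotent w <->
      exists t : btree n,
        [/\ is_bst t, two_reduced t, deepest_no_left t & sylv2 w (reading t)]).
Proof.
split=> [|w]; last exact: sylv2_idempotent_treeP.
exists (idem_readings n); split.
- by rewrite size_map size_idem_trees.
- by move=> _ /idem_readingsP[t /and3P[bt tt lt] ->]; apply/(sylv2_idempotent_reading bt tt).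
- move=> i j /andP[ij js] /sylv2_idem_readings.
  move=> /(_ (mem_nth _ (ltn_trans ij js)) (mem_nth _ js)) /eqP.
  by rewrite nth_uniq ?uniq_idem_readings ?(ltn_trans ij js) ?(ltn_eqF ij).
- move=> w /(sylv2_idempotentP w) lw; exists (reading (nf w)); last exact: sylv2_reading_nf.
  by apply/idem_readingsP; exists (nf w); rewrite // /idem_tree is_bst_nf two_reduced_nf.
Qed.
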